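(* Let $v_\eta(x,t)$ be a feed-forward neural network with input $(x,t)\in\mathbb{R}^d\times\mathbb{R}$ and constant parameters $\eta=(w_l,b_l,W_{l-1},\dots,W_0,w_0,b_0)$, of the form $v_\eta(x,t)=w_l^\top h_{l-1}(x,t)+b_l$, where $h_\ell(x,t)=\sigma(W_\ell h_{\ell-1}(x,t)+b_\ell)$ for $\ell=1,\dots,l-1$ and $h_0(x,t)=\sigma(W_0x+w_0t+b_0)$, with $\sigma$ an activation function applied componentwise. Then there exist a feed-forward neural network $u_\theta(x)$ with input $x\in\mathbb{R}^d$ and parameters $\theta$, and a differentiable curve $t\mapsto\theta(t)$, such that $u_{\theta(t)}(x)=v_\eta(x,t)$ for all $x\in\mathbb{R}^d$ and $t\in\mathbb{R}$. *)

From HB Require Import structures.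
From mathcomp Require Import all_boot all_order all_algebra.
From mathcomp Require Import all_classical all_reals all_analysis.
Set Implicit Arguments. Unset Strict Implicit. Unset Printing Implicit Defensive.
Import Order.TTheory GRing.Theory Num.Theory.
Local Open Scope ring_scope.

Section FFNN.
Variable R : realType.

(* Parameters of a feed-forward network with input dimension m and hidden
   widths ns = [:: n_0; ...; n_(l-1)]: for each hidden layer a weight matrix
   and a bias vector, then the output layer (w_l, b_l). *)
Fixpoint params (m : nat) (ns : seq nat) : Type :=
  match ns with
  | [::] => ('cV[R]_m * R)%type
  | n :: ns' => ('M[R]_(n, m) * 'cV[R]_n * params n ns')%type
  end.

Variable sigma : R -> R.

Fixpoint ffnn (m : nat) (ns : seq nat) : params m ns -> 'cV[R]_m -> R :=
  match ns return params m ns -> 'cV[R]_m -> R with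
  | [::] => fun p h => ((p.1)^T *m h) 0 0 + p.2
  | n :: ns' => fun p h => @ffnn n ns' p.2 (map_mx sigma (p.1.1 *m h + p.1.2))
  end.

(* The time-dependent network v_eta(x,t): first hidden layer
   h_0 = sigma (W_0 x + w_0 t + b_0), remaining layers given by eta. *)
Definition ffnn_xt (d n0 : nat) (ns : seq nat) (W0 : 'M[R]_(n0, d))
  (w0 b0 : 'cV[R]_n0) (eta : params n0 ns) (x : 'cV[R]_d) (t : R) : R :=
  ffnn eta (map_mx sigma (W0 *m x + t *: w0 + b0)).

Fixpoint diff_curve (m : nat) (ns : seq nat) : (R -> params m ns) -> Prop :=
  match ns return (R -> params m ns) -> Prop with
  | [::] => fun c =>
      (forall t (i : 'I_m) (j : 'I_1), derivable (fun s : R => (c s).1 i j) t 1)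
      /\ (forall t, derivable (fun s : R => (c s).2) t 1)
  | n :: ns' => fun c =>
      (forall t (i : 'I_n) (j : 'I_m), derivable (fun s : R => (c s).1.1 i j) t 1)
      /\ (forall t (i : 'I_n) (j : 'I_1), derivable (fun s : R => (c s).1.2 i j) t 1)
      /\ @diff_curve n ns' (fun s => (c s).2)
  end.

End FFNN.

From HB Require Import structures.
From mathcomp Require Import all_boot all_order all_algebra.
From mathcomp Require Import all_classical all_reals all_analysis.
Import Order.TTheory GRing.Theory Num.Theory.
Local Open Scope ring_scope.

(* The time input reaches the network only through the term [t *: w0] of the
   first layer, so it can be absorbed into the first bias: the network with
   first bias [t *: w0 + b0] and all other parameters fixed computes v_eta.
   That bias is affine in [t], hence the parameter curve is differentiable. *)

Lemma diff_curve_cst (R : realType) (ns : seq nat) :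
  forall (m : nat) (p : params R m ns), diff_curve (fun _ : R => p).
Proof.
elim: ns => [|n ns IH] m p /=; first by split=> *; exact: derivable_cst.
split; first by move=> *; exact: derivable_cst.
split; first by move=> *; exact: derivable_cst.
exact: IH.
Qed.

Lemma derivable_affine_mx_entry (R : realType) (m n : nat)
    (a b : 'M[R]_(m, n)) (i : 'I_m) (j : 'I_n) (t : R) :
  derivable (fun s : R => (s *: a + b) i j) t 1.
Proof.
have -> : (fun s : R => (s *: a + b) i j) = (fun s => s * a i j + b i j).
  by apply: funext => s; rewrite !mxE.
apply: derivableD; last exact: derivable_cst.
by apply: derivableM; [exact: derivable_id | exact: derivable_cst].
Qed.

Definition bias_absorbed_curve {R : realType} {d n0 : nat} {ns : seq nat}
    (W0 : 'M[R]_(n0, d)) (w0 b0 : 'cV[R]_n0) (eta : params R n0 ns) :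
    R -> params R d (n0 :: ns) :=
  fun t => ((W0, t *: w0 + b0), eta).

Lemma diff_curve_bias_absorbed (R : realType) (d n0 : nat) (ns : seq nat)
    (W0 : 'M[R]_(n0, d)) (w0 b0 : 'cV[R]_n0) (eta : params R n0 ns) :
  diff_curve (bias_absorbed_curve W0 w0 b0 eta).
Proof.
split; first by move=> *; exact: derivable_cst.
split; first by move=> *; exact: derivable_affine_mx_entry.
exact: diff_curve_cst.
Qed.

Lemma ffnn_bias_absorbed (R : realType) (sigma : R -> R) (d n0 : nat)
    (ns : seq nat) (W0 : 'M[R]_(n0, d)) (w0 b0 : 'cV[R]_n0)
    (eta : params R n0 ns) (x : 'cV[R]_d) (t : R) :
  ffnn sigma (bias_absorbed_curve W0 w0 b0 eta t) x
  = ffnn_xt sigma W0 w0 b0 eta x t.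
Proof. by rewrite /ffnn_xt /= addrA. Qed.

Theorem lemmaA1 (R : realType) (sigma : R -> R) (d n0 : nat) (ns : seq nat)
  (W0 : 'M[R]_(n0, d)) (w0 b0 : 'cV[R]_n0) (eta : params R n0 ns) :
  exists (ns' : seq nat) (theta : R -> params R d ns'),
    diff_curve theta /\
    forall (x : 'cV[R]_d) (t : R),
      ffnn sigma (theta t) x = ffnn_xt sigma W0 w0 b0 eta x t.
Proof.
exists (n0 :: ns), (bias_absorbed_curve W0 w0 b0 eta).
split; first exact: diff_curve_bias_absorbed.
exact: ffnn_bias_absorbed.
Qed.
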